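(* Let $M\in\mathbb R^{n\times n}$ be a sufficient matrix and let $B_1,B_2$ be complementary bases that are adjacent, i.e. $\dim\big(\mathcal C(B_1)\cap\mathcal C(B_2)\big)=n-1$. Then $|B_1\cap B_2|\ge n-2$.
   Context: Let $M\in\mathbb R^{n\times n}$ and $A=[\,I\;\;-M\,]\in\mathbb R^{n\times 2n}$, with columns indexed by $\{1,\dots,2n\}$; for $J\subseteq\{1,\dots,2n\}$, $A_{\cdot J}$ denotes the submatrix of columns indexed by $J$. For $i\in\{1,\dots,2n\}$ the complementary index is $\bar i=i+n$ if $i\le n$ and $\bar i=i-n$ if $i>n$. A set $J$ is complementary if $i\in J$ implies $\bar i\notin J$. A complementary basis is a complementary set $B$ with $|B|=n$ and $A_{\cdot B}$ invertible. For a complementary set $J$, the complementary cone is $\mathcal C(J)=\{A_{\cdot J}\lambda:\lambda\ge 0\}$. The dimension of a convex set is the dimension of its affine hull. $M$ is column sufficient if $[z_i(Mz)_i\le 0\ \forall i]\Rightarrow[z_i(Mz)_i=0\ \forall i]$; row sufficient if $M^T$ is column sufficient; sufficient if both. *)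

From HB Require Import structures.
From mathcomp Require Import all_boot all_order all_algebra.
Set Implicit Arguments. Unset Strict Implicit. Unset Printing Implicit Defensive.
Import Order.TTheory GRing.Theory Num.Theory.
Local Open Scope ring_scope.

Section LCP.
Variables (R : realFieldType) (n : nat).

Definition Amx (M : 'M[R]_n) : 'M[R]_(n, n + n) := row_mx 1%:M (- M).

Lemma cbar_proof (i : 'I_(n + n)) :
  ((if (i < n)%N then (i + n)%N else (i - n)%N) < n + n)%N.
Proof.
case: ifP => H; first by rewrite ltn_add2r.
by apply: leq_ltn_trans (leq_subr _ _) (ltn_ord i).
Qed.

Definition cbar (i : 'I_(n + n)) : 'I_(n + n) := Ordinal (cbar_proof i).

Definition complementary (J : {set 'I_(n + n)}) : Prop :=
  forall i, i \in J -> cbar i \notin J.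

Definition subcols (M : 'M[R]_n) (J : {set 'I_(n + n)}) : 'M[R]_(n, #|J|) :=
  \matrix_(i < n, k < #|J|) Amx M i (enum_val k).

Definition compl_basis (M : 'M[R]_n) (B : {set 'I_(n + n)}) : Prop :=
  complementary B /\
  exists e : #|B| = n, castmx (erefl n, e) (subcols M B) \in unitmx.

Definition ccone (M : 'M[R]_n) (J : {set 'I_(n + n)}) : 'cV[R]_n -> Prop :=
  fun x => exists lam : 'cV[R]_#|J|,
    (forall k, 0 <= lam k 0) /\ x = subcols M J *m lam.

(* affine dimension: dim of affine hull of S.
   affdim_ge S k : S contains k+1 affinely independent points
   x0, x0 + X_1, ..., x0 + X_k (columns X_j linearly independent). *)
Definition affdim_ge (S : 'cV[R]_n -> Prop) (k : nat) : Prop :=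
  exists (x0 : 'cV[R]_n) (X : 'M[R]_(n, k)),
    S x0 /\ (forall j, S (x0 + col j X)) /\ \rank X = k.

Definition affine_dim (S : 'cV[R]_n -> Prop) (d : nat) : Prop :=
  affdim_ge S d /\ forall k, affdim_ge S k -> (k <= d)%N.

Definition col_sufficient (M : 'M[R]_n) : Prop :=
  forall z : 'cV[R]_n,
    (forall i, z i 0 * (M *m z) i 0 <= 0) ->
    (forall i, z i 0 * (M *m z) i 0 = 0).

Definition row_sufficient (M : 'M[R]_n) : Prop := col_sufficient M^T.

Definition sufficient (M : 'M[R]_n) : Prop :=
  col_sufficient M /\ row_sufficient M.

End LCP.

From HB Require Import structures.
From mathcomp Require Import all_boot all_order all_algebra.
Import Order.TTheory GRing.Theory Num.Theory.
Local Open Scope ring_scope.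
Set Implicit Arguments. Unset Strict Implicit. Unset Printing Implicit Defensive.

(* Let P = C(B1) ∩ C(B2) have dimension n-1, witnessed by points x0 and
   x0 + X_j (j < n-1) with rank X = n-1, and let c be the sum of these points.
   Writing c in the basis B_i gives nonnegative coordinates lam_i, and a
   coordinate of c can only vanish if that coordinate vanishes on the whole
   column space of X; since the coordinate functionals are independent, at most
   n - rank X = 1 coordinate of c vanishes in each basis.  Spreading lam_i to
   a vector a_i of R^(2n) (zero outside B_i) gives two nonnegative
   complementary solutions of A a = c.  Column sufficiency forces the cross
   products a_1(j) a_2(j̄) to vanish.  Every j in B1 \ B2 has j̄ in B2, so j is
   the vanishing B1-coordinate or j̄ is the vanishing B2-coordinate: hence
   |B1 \ B2| <= 2. *)

Section ComplementaryIndex.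
Variable n : nat.

Lemma cbar_lshift (i : 'I_n) : cbar (lshift n i) = rshift n i.
Proof. by apply: val_inj; rewrite /= ltn_ord addnC. Qed.

Lemma cbar_rshift (i : 'I_n) : cbar (rshift n i) = lshift n i.
Proof. by apply: val_inj; rewrite /= ltnNge leq_addr /= addKn. Qed.

Lemma cbarK : involutive (@cbar n).
Proof.
move=> j; rewrite -(splitK j); case: (split j) => a /=.
  by rewrite cbar_lshift cbar_rshift.
by rewrite cbar_rshift cbar_lshift.
Qed.

Lemma cbar_inj : injective (@cbar n).
Proof. exact: inv_inj cbarK. Qed.

Lemma compl_full_mem (B : {set 'I_(n + n)}) :
  complementary B -> #|B| = n -> forall j, j \notin B -> cbar j \in B.
Proof.
move=> hc hB j hj; apply/negPn/negP => hcj.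
have hdisj : [disjoint B & @cbar n @: B].
  apply/pred0P => x /=; apply/andP => -[hx /imsetP [b hb hxb]].
  by move: (hc _ hx); rewrite hxb cbarK hb.
have hsub : B :|: @cbar n @: B \subset [set~ j].
  apply/subsetP => x; rewrite !inE => /orP [] hx; apply/eqP => hxj;
    move: hx; rewrite hxj ?(negbTE hj) //.
  by case/imsetP => b hb hjb; move: hcj; rewrite hjb cbarK hb.
move: (subset_leq_card hsub).
rewrite cardsC1 card_ord cardsU (disjoint_setI0 hdisj) cards0 subn0.
rewrite card_imset ?hB; last exact: cbar_inj.
by rewrite leqNgt ltn_predL (leq_ltn_trans (leq0n j) (ltn_ord j)).
Qed.

Lemma small_difference (B1 B2 Z1 Z2 : {set 'I_(n + n)}) :
  #|B1| = n -> (#|Z1| <= 1)%N -> (#|Z2| <= 1)%N ->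
  (forall j, j \in B1 -> j \notin B2 -> j \in Z1 \/ cbar j \in Z2) ->
  (n - 2 <= #|B1 :&: B2|)%N.
Proof.
move=> hB1 hZ1 hZ2 hcatch.
have hsub : B1 :\: B2 \subset Z1 :|: @cbar n @^-1: Z2.
  apply/subsetP => j; rewrite !inE => /andP [hj2 hj1].
  by apply/orP; apply: hcatch.
have card_diff : (#|B1 :\: B2| <= 2)%N.
  apply: leq_trans (subset_leq_card hsub) _; apply: leq_trans (leq_card_setU _ _) _.
  by rewrite card_preimset; [exact: (@leq_add _ _ 1 1) | exact: cbar_inj].
have -> : (n - 2 = #|B1| - 2)%N by rewrite hB1.
by rewrite -(cardsID B2 B1) leq_subLR [(2 + _)%N]addnC leq_add2l.
Qed.

End ComplementaryIndex.

Section CrossComplementarity.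
Variables (R : realFieldType) (n : nat) (M : 'M[R]_n).

(* Two nonnegative complementary solutions a1, a2 of A a = q are also
   complementary to each other when M is column sufficient: with z the
   difference of their last n blocks, A (a1 - a2) = 0 gives Mz = a1_I - a2_I,
   hence z_i (Mz)_i = -(a1(n+i) a2(i) + a2(n+i) a1(i)) <= 0, and sufficiency
   forces each of these nonnegative products to vanish. *)
Lemma col_sufficient_cross_compl (a1 a2 : 'cV[R]_(n + n)) :
  col_sufficient M ->
  Amx M *m a1 = Amx M *m a2 ->
  (forall j, 0 <= a1 j 0) -> (forall j, 0 <= a2 j 0) ->
  (forall j, a1 j 0 * a1 (cbar j) 0 = 0) ->
  (forall j, a2 j 0 * a2 (cbar j) 0 = 0) ->
  forall j, a1 j 0 * a2 (cbar j) 0 = 0.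
Proof.
move=> hM hA h1 h2 c1 c2.
have /eqP : Amx M *m (a1 - a2) = 0 by rewrite mulmxBr hA subrr.
rewrite -[a1 - a2]vsubmxK /Amx mul_row_col mul1mx mulNmx subr_eq0 => /eqP hMz.
set z := dsubmx (a1 - a2).
have zMz i : z i 0 * (M *m z) i 0 =
    - (a1 (rshift n i) 0 * a2 (lshift n i) 0
       + a2 (rshift n i) 0 * a1 (lshift n i) 0).
  rewrite -hMz /z !mxE.
  have e1 := c1 (lshift n i); have e2 := c2 (lshift n i).
  rewrite cbar_lshift in e1 e2.
  rewrite mulrBl !mulrBr (mulrC (a1 _ _) (a1 _ _)) e1.
  by rewrite (mulrC (a2 _ _) (a2 _ _)) e2 sub0r subr0 opprD.
have zMz_le0 i : z i 0 * (M *m z) i 0 <= 0.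
  by rewrite zMz oppr_le0 addr_ge0 // mulr_ge0.
have cross i : a1 (rshift n i) 0 * a2 (lshift n i) 0 = 0 /\
               a2 (rshift n i) 0 * a1 (lshift n i) 0 = 0.
  move: (hM z zMz_le0 i); rewrite zMz => /eqP; rewrite oppr_eq0.
  by rewrite paddr_eq0 ?mulr_ge0 // => /andP [/eqP -> /eqP ->].
move=> j; rewrite -(splitK j); case: (split j) => a /=.
  by rewrite cbar_lshift mulrC (proj2 (cross a)).
by rewrite cbar_rshift (proj1 (cross a)).
Qed.

End CrossComplementarity.

Section Spread.
Variables (R : realFieldType) (n : nat).

Definition spread (B : {set 'I_(n + n)}) (lam : 'cV[R]_#|B|) : 'cV[R]_(n + n) :=
  \matrix_(j < n + n, k < #|B|) (enum_val k == j)%:R *m lam.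

Variable B : {set 'I_(n + n)}.

Lemma Amx_spread (M : 'M[R]_n) (lam : 'cV[R]_#|B|) :
  Amx M *m spread lam = subcols M B *m lam.
Proof.
rewrite /spread mulmxA; congr (_ *m _); apply/matrixP => i k.
rewrite mxE [RHS]mxE; under eq_bigr => j _ do rewrite [X in _ * X]mxE.
rewrite (bigD1 (enum_val k)) //= eqxx mulr1 big1 ?addr0 // => j hj.
by rewrite eq_sym (negbTE hj) mulr0.
Qed.

Lemma spread_enum_val (lam : 'cV[R]_#|B|) k : spread lam (enum_val k) 0 = lam k 0.
Proof.
rewrite mxE (bigD1 k) //= mxE eqxx mul1r big1 ?addr0 // => k' hk.
by rewrite mxE (inj_eq enum_val_inj) (negbTE hk) mul0r.
Qed.

Lemma spread_out (lam : 'cV[R]_#|B|) j : j \notin B -> spread lam j 0 = 0.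
Proof.
move=> hj; rewrite mxE big1 // => k _; rewrite mxE.
by case: eqP => [hk|_]; [move: hj; rewrite -hk enum_valP | rewrite mul0r].
Qed.

Lemma spread_ge0 (lam : 'cV[R]_#|B|) :
  (forall k, 0 <= lam k 0) -> forall j, 0 <= spread lam j 0.
Proof.
by move=> h j; rewrite mxE sumr_ge0 // => k _; rewrite mxE mulr_ge0 ?ler0n.
Qed.

Lemma spread_compl (lam : 'cV[R]_#|B|) :
  complementary B -> forall j, spread lam j 0 * spread lam (cbar j) 0 = 0.
Proof.
move=> hc j; have [hj|hj] := boolP (j \in B).
  by rewrite (spread_out _ (hc _ hj)) mulr0.
by rewrite spread_out ?mul0r.
Qed.

Lemma spread_zero (lam : 'cV[R]_#|B|) j :
  j \in B -> spread lam j 0 = 0 -> j \in enum_val @: [set k | (lam k 0 == 0)%R].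
Proof.
move=> hj h0; apply/imsetP; exists (enum_rank_in hj j); last first.
  by rewrite enum_rankK_in.
by rewrite inE -h0 -spread_enum_val enum_rankK_in.
Qed.

End Spread.

Section ConeCoordinates.
Variables (R : realFieldType) (n m : nat).
Variables (S : 'M[R]_(n, m)) (L : 'M[R]_(m, n)).
Hypothesis LS : L *m S = 1%:M.

(* The cone spanned by the columns of S; ccone M B is cone (subcols M B). *)
Definition cone (x : 'cV[R]_n) : Prop :=
  exists lam : 'cV[R]_m, (forall k, 0 <= lam k 0) /\ x = S *m lam.

(* Rows of the left inverse L annihilating X are independent and lie in the
   left kernel of X, so there are at most n - rank X of them. *)
Lemma card_annihilating_rows p (X : 'M[R]_(n, p)) :
  (#|[set k | (row k L *m X == 0)%R]| <= n - \rank X)%N.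
Proof.
set K := [set k | _]; set f : 'I_#|K| -> 'I_m := enum_val.
have QT : rowsub f L *m colsub f S = 1%:M.
  rewrite -mxsub_mul LS; apply/matrixP => i j.
  by rewrite !mxE (inj_eq enum_val_inj).
have QX : rowsub f L *m X = 0.
  apply/row_matrixP => i; rewrite row_mul row_rowsub row0.
  by have := enum_valP i; rewrite inE => /eqP.
rewrite -[#|K|](@mxrank1 R) -QT -(mxrank_ker X).
exact: leq_trans (mxrankM_maxl _ _) (mxrankS (introT sub_kermxP QX)).
Qed.

Lemma cone_coords (x : 'cV[R]_n) :
  cone x -> S *m (L *m x) = x /\ forall k, 0 <= (L *m x) k 0.
Proof.
case=> lam [hlam ->]; have -> : L *m (S *m lam) = lam by rewrite mulmxA LS mul1mx.
by [].
Qed.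

Lemma cone_sum_coords p (x0 : 'cV[R]_n) (X : 'M[R]_(n, p)) :
  cone x0 -> (forall j, cone (x0 + col j X)) ->
  let c := x0 + \sum_j (x0 + col j X) in
  [/\ S *m (L *m c) = c, forall k, 0 <= (L *m c) k 0
    & (#|[set k | ((L *m c) k 0 == 0)%R]| <= n - \rank X)%N].
Proof.
move=> h0 hX c.
have [Sx0 Lx0] := cone_coords h0.
have Lc k : (L *m c) k 0 = (L *m x0) k 0 + \sum_j (L *m (x0 + col j X)) k 0.
  by rewrite mulmxDr mulmx_sumr mxE summxE.
have LX_ge0 k j : 0 <= (L *m (x0 + col j X)) k 0 by case: (cone_coords (hX j)).
have Lc_ge0 k : 0 <= (L *m c) k 0 by rewrite Lc addr_ge0 ?sumr_ge0.
split=> //.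
  rewrite mulmxA mulmxDr mulmx_sumr -mulmxA Sx0; congr (_ + _).
  by apply: eq_bigr => j _; rewrite -mulmxA; case: (cone_coords (hX j)).
apply: leq_trans (card_annihilating_rows X); apply: subset_leq_card.
apply/subsetP => k; rewrite !inE Lc paddr_eq0 ?sumr_ge0 //.
case/andP => /eqP hx0 /eqP /(psumr_eq0P (fun j _ => LX_ge0 k j)) hsum.
apply/eqP/rowP => j; rewrite -row_mul mxE [RHS]mxE.
have := hsum j isT; rewrite mulmxDr mxE hx0 add0r => <-.
by rewrite !mxE; apply: eq_bigr => r _; rewrite mxE.
Qed.

End ConeCoordinates.

Lemma cast_unit_left_inv (R : realFieldType) (n m : nat) (e : m = n)
    (S : 'M[R]_(n, m)) :
  castmx (erefl n, e) S \in unitmx -> exists L : 'M[R]_(m, n), L *m S = 1%:M.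
Proof. by subst m; rewrite castmx_id => hS; exists (invmx S); rewrite mulVmx. Qed.

Theorem mainTheorem1 (R : realFieldType) (n : nat) (M : 'M[R]_n)
    (B1 B2 : {set 'I_(n + n)}) :
  sufficient M ->
  compl_basis M B1 -> compl_basis M B2 ->
  affine_dim (fun x => ccone M B1 x /\ ccone M B2 x) n.-1 ->
  (n - 2 <= #|B1 :&: B2|)%N.
Proof.
move=> [hM _] [hc1 [e1 u1]] [hc2 [e2 u2]] [[x0 [X [hx0 [hX hr]]]] _].
have [L1 LS1] := cast_unit_left_inv u1; have [L2 LS2] := cast_unit_left_inv u2.
have [Sc1 lam1_ge0 Z1] := cone_sum_coords LS1 (proj1 hx0) (fun j => proj1 (hX j)).
have [Sc2 lam2_ge0 Z2] := cone_sum_coords LS2 (proj2 hx0) (fun j => proj2 (hX j)).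
set c := x0 + _ in Sc1 Sc2 lam1_ge0 lam2_ge0 Z1 Z2.
have one_zero : (n - \rank X <= 1)%N by rewrite hr leq_subLR addn1 leqSpred.
have Aeq : Amx M *m spread (L1 *m c) = Amx M *m spread (L2 *m c).
  by rewrite !Amx_spread Sc1 Sc2.
have cross := col_sufficient_cross_compl hM Aeq (spread_ge0 lam1_ge0)
  (spread_ge0 lam2_ge0) (spread_compl _ hc1) (spread_compl _ hc2).
apply: (small_difference e1 (leq_trans (leq_imset_card _ _) (leq_trans Z1 one_zero))
                            (leq_trans (leq_imset_card _ _) (leq_trans Z2 one_zero))).
move=> j hj1 hj2; have /eqP := cross j; rewrite mulf_eq0 => /orP [] /eqP h0.
  by left; exact: spread_zero hj1 h0.
by right; exact: spread_zero (compl_full_mem hc2 e2 hj2) h0.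
Qed.
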